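(* Let $r\in\mathbb{N}$ be fixed and let $\chi:\mathbb{R}_+\to\mathbb{R}$ be a kernel (in the sense described in the context). Then for every bounded, locally integrable function $f:\mathbb{R}_+\to\mathbb{R}$, $$\lim_{w\to\infty}\left(E_{w,r}^{\chi}f\right)(x)=f(x)$$ holds at every point $x\in\mathbb{R}_+$ at which $f$ is continuous. Furthermore, if $f\in\mathcal{C}(\mathbb{R}_+)$, then $$\lim_{w\to\infty}\left\|E_{w,r}^{\chi}f-f\right\|_\infty=0.$$
   Context: $\mathbb{R}_+=(0,\infty)$. A kernel is a continuous function $\chi:\mathbb{R}_+\to\mathbb{R}$ such that: (1) $\int_{\mathbb{R}_+}|\chi(x)|\frac{dx}{x}<\infty$ and $\chi$ is bounded on $[1/e,e]$; (2) $\sum_{k\in\mathbb{Z}}\chi(e^{-k}u)=1$ for every $u\in\mathbb{R}_+$, and $M_0(\chi):=\sup_{u\in\mathbb{R}_+}\sum_{k\in\mathbb{Z}}|\chi(e^{-k}u)|<+\infty$; (3) $\lim_{\gamma\to\infty}\sum_{|k-\log u|>\gamma}|\chi(e^{-k}u)|=0$ uniformly with respect to $u\in\mathbb{R}_+$. For $r\in\mathbb{N}$, $w>0$ and a locally integrable $f:\mathbb{R}_+\to\mathbb{R}$, the Mellin–Steklov exponential sampling operator of order $r$ is $$\left(E_{w,r}^{\chi}f\right)(x):=\sum_{k\in\mathbb{Z}}\chi(e^{-k}x^{w})\, w^{r}\int_1^{e^{1/w}}\!\!\cdots\!\int_1^{e^{1/w}}\sum_{m=1}^{r}(-1)^{1-m}\binom{r}{m}f\!\left(e^{k/w}(t_1\cdots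 t_r)^{m/r}\right)\frac{dt_1}{t_1}\cdots\frac{dt_r}{t_r},\quad x\in\mathbb{R}_+.$$ $CB(\mathbb{R}_+)$ is the space of bounded continuous functions on $\mathbb{R}_+$ with sup-norm $\|\cdot\|_\infty$. A function $f$ is log-uniformly continuous on $\mathbb{R}_+$ if for every $\varepsilon>0$ there is $\delta>0$ with $|f(u)-f(v)|<\varepsilon$ whenever $|\log u-\log v|\le\delta$, $u,v\in\mathbb{R}_+$. $\mathcal{C}(\mathbb{R}_+)$ denotes the subspace of $CB(\mathbb{R}_+)$ of log-uniformly continuous functions. *)

From HB Require Import structures.
From mathcomp Require Import all_boot all_order all_algebra.
From mathcomp Require Import all_classical all_reals all_analysis.
Set Implicit Arguments. Unset Strict Implicit. Unset Printing Implicit Defensive.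
Import Order.TTheory GRing.Theory Num.Theory.
Import numFieldNormedType.Exports.
Local Open Scope classical_set_scope.
Local Open Scope ring_scope.

Section Defs.
Variable R : realType.

Definition Rpos : set R := `]0, +oo[.

Definition zpartial (a : int -> R) (N : nat) : R :=
  \sum_(i < (2 * N).+1) a (i%:Z - N%:Z).

(* the sum over k in Z, as the limit of the symmetric partial sums
   (only used for families that are absolutely summable) *)
Definition zsum (a : int -> R) : R := limn (zpartial a).

Definition haar_int (a b : R) (g : R -> R) : R :=
  Rintegral lebesgue_measure `[a, b] (fun t => g t / t).

(* iterated r-fold integral
   int_1^{e^{1/w}} ... int_1^{e^{1/w}} g(t_1 ... t_n) dt_1/t_1 ... dt_n/t_n *)
Fixpoint iter_int (w : R) (n : nat) (g : R -> R) : R :=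
  match n with
  | O => g 1
  | S n' => haar_int 1 (expR (w^-1))
              (fun t => iter_int w n' (fun p => g (t * p)))
  end.

Definition is_kernel (chi : R -> R) : Prop :=
  {within Rpos, continuous chi} /\
  (\int[lebesgue_measure]_(x in Rpos) (`|chi x| / x)%:E < +oo)%E /\
  (exists B, forall x, expR (-1) <= x <= expR 1 -> `|chi x| <= B) /\
  (forall u, 0 < u -> zpartial (fun k => chi (expR (- k%:~R) * u)) @ \oo --> (1 : R)) /\
  (exists M0, forall u, 0 < u -> forall N,
      zpartial (fun k => `|chi (expR (- k%:~R) * u)|) N <= M0) /\
  (forall eps, 0 < eps -> exists g0 : R, forall g, g0 < g -> forall u, 0 < u ->
      zsum (fun k => if g < `|k%:~R - ln u| then `|chi (expR (- k%:~R) * u)| else 0)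
        < eps).

Definition MS_op (chi : R -> R) (w : R) (r : nat) (f : R -> R) (x : R) : R :=
  zsum (fun k => chi (expR (- k%:~R) * x `^ w) *
    (w ^+ r * iter_int w r (fun P =>
       \sum_(1 <= m < r.+1)
          ((-1) ^+ m.+1 * ('C(r, m))%:R * f (expR (k%:~R / w) * P `^ (m%:R / r%:R)))))).

Definition bounded_Rp (f : R -> R) : Prop :=
  exists M, forall x, 0 < x -> `|f x| <= M.

Definition loc_integrable_Rp (f : R -> R) : Prop :=
  forall a b, 0 < a -> a <= b -> lebesgue_measure.-integrable `[a, b] (EFin \o f).

Definition log_unif_cont (f : R -> R) : Prop :=
  forall eps, 0 < eps -> exists delta, 0 < delta /\
    forall u v, 0 < u -> 0 < v -> `|ln u - ln v| <= delta -> `|f u - f v| < eps.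

Definition in_logC (f : R -> R) : Prop :=
  bounded_Rp f /\ {within Rpos, continuous f} /\ log_unif_cont f.

Definition supnorm_Rp (g : R -> R) : \bar R :=
  ereal_sup [set (`|g x|)%:E | x in Rpos].

End Defs.

(* Since the kernel sums to 1, (E_w f)(x) - f(x) = sum_k chi(e^-k x^w) (B_k - f(x)),
   where B_k = w^r int...int sum_m (-1)^(m+1) C(r,m) f(e^(k/w) (t_1...t_r)^(m/r))
   is a Steklov mean of f.  The alternating binomial coefficients also sum to 1,
   so B_k is within (sum_m C(r,m)) eps of f(x) as soon as |k - w log x| <= w delta/2
   and r/w <= delta/2, eps being the oscillation of f on the logarithmic ball of
   radius delta around x.  The remaining indices contribute at most
   (sum_m C(r,m) + 1) sup|f| times a tail of the kernel, which vanishes as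
   w -> +oo by axiom (3).  The estimate depends on x only through (delta, eps),
   hence is uniform for log-uniformly continuous f. *)

From HB Require Import structures.
From mathcomp Require Import all_boot all_order all_algebra.
From mathcomp Require Import all_classical all_reals all_analysis.
From mathcomp Require Import ring lra zify.
Import Order.TTheory GRing.Theory Num.Theory.
Import numFieldNormedType.Exports.
Local Open Scope classical_set_scope.
Local Open Scope ring_scope.
Set Implicit Arguments. Unset Strict Implicit. Unset Printing Implicit Defensive.

Section nonmeasurable_integral.
Context d (T : measurableType d) (R : realType).
Variable mu : {measure set T -> \bar R}.
Local Open Scope ereal_scope.

Lemma fine_sube_sandwich (p1 p p2 n1 n n2 : \bar R) :
  p1 \is a fin_num -> p2 \is a fin_num -> n1 \is a fin_num -> n2 \is a fin_num ->
  p1 <= p <= p2 -> n2 <= n <= n1 ->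
  (fine (p1 - n1) <= fine (p - n) <= fine (p2 - n2))%R.
Proof.
move: p1 p2 n1 n2 => [p1||] [p2||] [n1||] [n2||] // _ _ _ _.
move=> /andP[p1p pp2] /andP[n2n nn1].
have fp : p \is a fin_num.
  by rewrite fin_numElt (lt_le_trans _ p1p) ?(le_lt_trans pp2) ?ltNyr ?ltry.
have fn : n \is a fin_num.
  by rewrite fin_numElt (lt_le_trans _ n2n) ?(le_lt_trans nn1) ?ltNyr ?ltry.
move: p n fp fn p1p pp2 n2n nn1 => [p||] [n||] // _ _; rewrite !lee_fin /= => *.
by apply/andP; split; apply: lerB.
Qed.

Lemma ge0_le_integral_nonmeas (D : set T) (f g : T -> \bar R) :
  (forall x, D x -> 0 <= f x) -> (forall x, D x -> f x <= g x) ->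
  \int[mu]_(x in D) f x <= \int[mu]_(x in D) g x.
Proof.
(* The integral of a nonnegative function is a supremum over the simple
   functions below it, so no measurability is needed. *)
move=> f0 fg.
have g0 x : D x -> 0 <= g x by move=> Dx; exact: le_trans (f0 _ Dx) (fg _ Dx).
rewrite ge0_integralE; last exact: f0.
rewrite ge0_integralE; last exact: g0.
apply: ereal_sup_le => _ [h hf <-]; exists h => //= x.
apply: le_trans (hf x) _; rewrite /patch; case: ifP => // /set_mem Dx; exact: fg.
Qed.

Lemma le_integral_funrpos (D : set T) (h1 h2 : T -> R) :
  (forall x, D x -> h1 x <= h2 x)%R ->
  \int[mu]_(x in D) (EFin \o (h1^\+)%R) x <= \int[mu]_(x in D) (EFin \o (h2^\+)%R) x.
Proof.
move=> h12; apply: ge0_le_integral_nonmeas => x Dx /=; rewrite lee_fin.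
  exact: funrpos_ge0.
exact: le_max2 (h12 _ Dx) (lexx 0%R).
Qed.

Lemma le_integral_funrneg (D : set T) (h1 h2 : T -> R) :
  (forall x, D x -> h1 x <= h2 x)%R ->
  \int[mu]_(x in D) (EFin \o (h2^\-)%R) x <= \int[mu]_(x in D) (EFin \o (h1^\-)%R) x.
Proof.
move=> h12; apply: ge0_le_integral_nonmeas => x Dx /=; rewrite lee_fin.
  exact: funrneg_ge0.
by apply: le_max2 (lexx 0%R); rewrite lerN2; exact: h12.
Qed.

Lemma Rintegral_sandwich (D : set T) (f1 g f2 : T -> R) : measurable D ->
  mu.-integrable D (EFin \o f1) -> mu.-integrable D (EFin \o f2) ->
  (forall x, D x -> f1 x <= g x <= f2 x)%R ->
  (Rintegral mu D f1 <= Rintegral mu D g <= Rintegral mu D f2)%R.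
Proof.
move=> mD if1 if2 f1gf2.
have [le1 le2] : (forall x, D x -> f1 x <= g x)%R /\ (forall x, D x -> g x <= f2 x)%R.
  by split=> x /f1gf2 /andP[].
rewrite /Rintegral (integralE mu D (EFin \o f1)) (integralE mu D (EFin \o g)).
rewrite (integralE mu D (EFin \o f2)); apply: fine_sube_sandwich.
- exact: integrable_pos_fin_num.
- exact: integrable_pos_fin_num.
- exact: integrable_neg_fin_num.
- exact: integrable_neg_fin_num.
- by rewrite !funerpos (le_integral_funrpos le1) (le_integral_funrpos le2).
- by rewrite !funerneg (le_integral_funrneg le1) (le_integral_funrneg le2).
Qed.

End nonmeasurable_integral.

Section haar_integral.
Variable R : realType.
Local Notation mu := (@lebesgue_measure R).

Lemma continuous_within_cdivx (a b c : R) : 0 < a ->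
  {within `[a, b], continuous (fun t => c / t)}.
Proof.
move=> a0; apply: continuous_in_subspaceT => t; rewrite inE /= in_itv /= => /andP[ta _].
apply: continuousM; first exact: cst_continuous.
by apply: inv_continuous; rewrite gt_eqF // (lt_le_trans a0).
Qed.

Lemma Rintegral_cdivx (a b c : R) : 0 < a < b ->
  Rintegral mu `[a, b] (fun t => c / t) = c * (ln b - ln a).
Proof.
move=> /andP[a0 ab]; rewrite /Rintegral.
rewrite (@continuous_FTC2 _ _ (fun t => c * ln t)) //=.
- by rewrite mulrBr.
- exact: continuous_within_cdivx.
- split.
  + move=> t; rewrite in_itv /= => /andP[ta _].
    by apply: derivableZ; apply: ex_derive; apply: is_derive1_ln; exact: lt_trans ta.
  + by apply: cvg_at_right_filter; apply: continuousZl_tmp; exact: continuous_ln.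
  + apply: cvg_at_left_filter; apply: continuousZl_tmp; apply: continuous_ln.
    exact: lt_trans ab.
- move=> t; rewrite in_itv /= => /andP[ta _].
  have t0 : 0 < t by exact: lt_trans ta.
  rewrite derive1E deriveZ /=; last by apply: ex_derive; exact: is_derive1_ln.
  by rewrite (@derive_val _ _ _ _ _ _ _ (is_derive1_ln t0)).
Qed.

Lemma haar_int_bounds (h : R -> R) (a b lo hi : R) : 0 < a < b ->
  (forall t, a <= t <= b -> lo <= h t <= hi) ->
  lo * (ln b - ln a) <= haar_int a b h <= hi * (ln b - ln a).
Proof.
move=> /[dup] ab /andP[a0 _] hb; rewrite -!(Rintegral_cdivx _ ab).
have integrable_cdivx c : mu.-integrable `[a, b] (EFin \o (fun t => c / t)).
  apply: continuous_compact_integrable; first exact: segment_compact.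
  exact: continuous_within_cdivx.
apply: Rintegral_sandwich => // t; rewrite /= in_itv /=.
move=> /[dup] /hb /andP[lot thi] /andP[ta _].
have t0 : 0 < t by exact: lt_le_trans ta.
by rewrite !ler_pM2r ?invr_gt0 // lot thi.
Qed.

End haar_integral.

Section iterated_integral.
Variable R : realType.

Lemma pdiv_betweenE (c y lo hi : R) : 0 < c ->
  (lo / c <= y <= hi / c) = (lo <= c * y <= hi).
Proof. by move=> c0; rewrite ler_pdivrMr // ler_pdivlMr // mulrC. Qed.

Lemma iter_int_bounds n (w : R) (g : R -> R) (lo hi : R) : 0 < w ->
  (forall p, 1 <= p <= expR (n%:R / w) -> lo <= g p <= hi) ->
  lo <= w ^+ n * iter_int w n g <= hi.
Proof.
elim: n g => [|n IH] g w0 hg.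
  by rewrite expr0 mul1r; apply: hg; rewrite mul0r expR0 lexx.
rewrite -pdiv_betweenE ?exprn_gt0 //.
have inner t : 1 <= t <= expR w^-1 ->
    lo / w ^+ n <= iter_int w n (fun p => g (t * p)) <= hi / w ^+ n.
  move=> /andP[t1 tb]; rewrite pdiv_betweenE ?exprn_gt0 //.
  apply: IH => // p /andP[p1 pb]; apply: hg; rewrite mulr_ege1 //=.
  rewrite -natr1 mulrDl mul1r expRD mulrC.
  by apply: ler_pM => //; [exact: le_trans ler01 p1 | exact: le_trans ler01 t1].
have e1 : (0 : R) < 1 < expR w^-1 by rewrite ltr01 pexpR_gt1 ?invr_gt0.
by have := haar_int_bounds e1 inner; rewrite expRK ln1 subr0 -!mulrA -!invfM -!exprSr.
Qed.

End iterated_integral.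

Section symmetric_sums.
Variable R : realType.
Implicit Types (a b : int -> R) (N : nat).

Lemma zpartialD a b N : zpartial (fun k => a k + b k) N = zpartial a N + zpartial b N.
Proof. by rewrite /zpartial big_split. Qed.

Lemma zpartialB a b N : zpartial (fun k => a k - b k) N = zpartial a N - zpartial b N.
Proof. by rewrite /zpartial sumrB. Qed.

Lemma zpartialZ a c N : zpartial (fun k => c * a k) N = c * zpartial a N.
Proof. by rewrite /zpartial mulr_sumr. Qed.

Lemma ler_zpartial a b N : (forall k, a k <= b k) -> zpartial a N <= zpartial b N.
Proof. by move=> ab; apply: ler_sum => i _; exact: ab. Qed.

Lemma ler_norm_zpartial a N : `|zpartial a N| <= zpartial (fun k => `|a k|) N.
Proof. exact: ler_norm_sum. Qed.

Lemma zpartialS a N : zpartial a N.+1 = a (- (N.+1)%:Z) + zpartial a N + a (N.+1)%:Z.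
Proof.
rewrite /zpartial (_ : (2 * N.+1).+1 = ((2 * N).+1).+2)%N ?mulnS //.
rewrite big_ord_recl big_ord_recr /= -addrA sub0r; congr (_ + (_ + a _)).
  by apply: eq_bigr => i _; congr a; rewrite /bump leq0n add1n; lia.
by rewrite /bump leq0n add1n; lia.
Qed.

Lemma nondecreasing_zpartial a : (forall k, 0 <= a k) -> nondecreasing_seq (zpartial a).
Proof.
move=> a0; apply/nondecreasing_seqP => N.
by rewrite zpartialS -addrA addrCA lerDl addr_ge0.
Qed.

Section bounded_nonneg.
Variables (a : int -> R) (M : R).
Hypotheses (a0 : forall k, 0 <= a k) (aM : forall N, zpartial a N <= M).

Lemma is_cvg_zpartial_ge0 : cvgn (zpartial a).
Proof.
apply: nondecreasing_is_cvgn; first exact: nondecreasing_zpartial.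
by exists M => _ [N _ <-]; exact: aM.
Qed.

Lemma zpartial_le_zsum N : zpartial a N <= zsum a.
Proof.
apply: nondecreasing_cvgn_le; first exact: nondecreasing_zpartial.
exact: is_cvg_zpartial_ge0.
Qed.

End bounded_nonneg.

Lemma is_cvg_zpartial_abs b M : (forall N, zpartial (fun k => `|b k|) N <= M) ->
  cvgn (zpartial b).
Proof.
move=> bM.
have part_le_abs (p : int -> R) : (forall k, 0 <= p k <= `|b k|) -> cvgn (zpartial p).
  move=> p_b; apply: (@is_cvg_zpartial_ge0 _ M) => [k|N]; first by case/andP: (p_b k).
  by apply: le_trans (bM N); apply: ler_zpartial => k; case/andP: (p_b k).
have -> : zpartial b = fun N => zpartial (b^\+) N - zpartial (b^\-) N.
  by apply/funext => N; rewrite -zpartialB; congr zpartial; rewrite -{1}(funrposBneg b).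
apply: is_cvgB; apply: part_le_abs => k.
  by rewrite funrpos_ge0 -[`|b k|]/((Num.norm \o b) k) -funrposDneg lerDl funrneg_ge0.
by rewrite funrneg_ge0 -[`|b k|]/((Num.norm \o b) k) -funrposDneg lerDr funrpos_ge0.
Qed.

Lemma norm_limn_le (u : R ^nat) c : cvgn u -> (forall N, `|u N| <= c) -> `|limn u| <= c.
Proof.
move=> cu uc; rewrite -lim_norm //; apply: limr_le; first exact: is_cvg_norm.
by near=> N; exact: uc.
Unshelve. all: by end_near.
Qed.

Lemma zsum_weighted_dev (a B : int -> R) (far : pred int) (c M0 C e eta : R) :
  (forall N, zpartial (fun k => `|a k|) N <= M0) -> zpartial a @ \oo --> (1 : R) ->
  0 <= e -> (forall k, `|B k - c| <= C) -> (forall k, ~~ far k -> `|B k - c| <= e) ->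
  zsum (fun k => if far k then `|a k| else 0) <= eta ->
  `|zsum (fun k => a k * B k) - c| <= e * M0 + C * eta.
Proof.
move=> aM0 a1 e0 BC Be tail_eta.
have C0 : 0 <= C := le_trans (normr_ge0 _) (BC 0).
pose tail k := if far k then `|a k| else 0.
have tail_le k : 0 <= tail k <= `|a k| by rewrite /tail; case: ifP; rewrite lexx ?normr_ge0.
have tail_bound N : zpartial tail N <= eta.
  apply: le_trans tail_eta; apply: (@zpartial_le_zsum _ M0) => [k|N'].
    by case/andP: (tail_le k).
  by apply: le_trans (aM0 N'); apply: ler_zpartial => k; case/andP: (tail_le k).
pose b k := a k * (B k - c).
have b_le k : `|b k| <= e * `|a k| + C * tail k.
  rewrite /b /tail normrM mulrC; case: ifP => [_|/negbT /Be near].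
    apply: le_trans (ler_wpM2r (normr_ge0 _) (BC k)) _.
    by rewrite lerDr mulr_ge0.
  by rewrite mulr0 addr0 ler_wpM2r.
have b_abs_le N : zpartial (fun k => `|b k|) N <= e * M0 + C * eta.
  apply: le_trans (ler_zpartial _ b_le) _; rewrite zpartialD !zpartialZ.
  by apply: lerD; apply: ler_wpM2l.
have cvg_b : cvgn (zpartial b) := is_cvg_zpartial_abs b_abs_le.
have split_sum : zpartial (fun k => a k * B k) = fun N => zpartial b N + c * zpartial a N.
  apply/funext => N; rewrite -zpartialZ -zpartialD; congr zpartial.
  by apply/funext => k; rewrite /b; ring.
have : zpartial (fun k => a k * B k) @ \oo --> zsum b + c * 1.
  by rewrite split_sum; apply: cvgD; [exact: cvg_b | exact: cvgM (cvg_cst c) a1].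
rewrite /zsum => /cvg_lim -> //; rewrite mulr1 addrK.
apply: norm_limn_le => // N; exact: le_trans (ler_norm_zpartial _ _) (b_abs_le N).
Qed.

End symmetric_sums.

Section steklov.
Variable R : realType.
Implicit Types (f : R -> R) (r : nat).

Definition log_modulus_at f (x delta eps : R) :=
  forall y, 0 < y -> `|ln y - ln x| <= delta -> `|f y - f x| <= eps.

Definition binom_abs_sum r : R := \sum_(1 <= m < r.+1) 'C(r, m)%:R.

Definition steklov_integrand f (w : R) r (k P : R) : R :=
  \sum_(1 <= m < r.+1)
     ((-1) ^+ m.+1 * 'C(r, m)%:R * f (expR (k / w) * P `^ (m%:R / r%:R))).

Definition steklov_sample f (w : R) r (k : int) : R :=
  w ^+ r * iter_int w r (steklov_integrand f w r k%:~R).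

Lemma binom_abs_sum_ge0 r : 0 <= binom_abs_sum r.
Proof. by apply: sumr_ge0 => m _; exact: ler0n. Qed.

Lemma sum_alt_binom r : (0 < r)%N ->
  \sum_(1 <= m < r.+1) (-1) ^+ m.+1 * 'C(r, m)%:R = 1 :> R.
Proof.
move=> r0.
have : \sum_(0 <= m < r.+1) (-1) ^+ m * 'C(r, m)%:R = 0 :> R.
  rewrite big_mkord [RHS](_ : 0 = (1 + -1 : R) ^+ r); last by rewrite subrr expr0n gtn_eqF.
  by rewrite exprDn; apply: eq_bigr => m _; rewrite expr1n mul1r mulr_natr.
rewrite big_ltn // expr0 mul1r bin0 => /eqP; rewrite addr_eq0 => /eqP alt.
under eq_bigr => m _ do rewrite exprS mulN1r mulNr.
by rewrite sumrN -alt.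
Qed.

Lemma steklov_integrand_bound f (w M k P : R) r :
  (forall y, 0 < y -> `|f y| <= M) -> 0 < P ->
  `|steklov_integrand f w r k P| <= binom_abs_sum r * M.
Proof.
move=> fM P0; rewrite /steklov_integrand /binom_abs_sum mulr_suml.
apply: le_trans (ler_norm_sum _ _ _) _; apply: ler_sum => m _.
rewrite !normrM normrX normrN1 expr1n mul1r ger0_norm ?ler0n //.
by apply: ler_wpM2l; [exact: ler0n | apply: fM; rewrite mulr_gt0 ?expR_gt0 ?powR_gt0].
Qed.

Lemma steklov_integrand_near f (x w k P eps delta : R) r : (0 < r)%N ->
  log_modulus_at f x delta eps -> `|k / w - ln x| <= delta / 2 ->
  r%:R / w <= delta / 2 -> 1 <= P <= expR (r%:R / w) ->
  `|steklov_integrand f w r k P - f x| <= binom_abs_sum r * eps.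
Proof.
move=> r0 fx hk hr /andP[P1 Pb].
have P0 : 0 < P by exact: lt_le_trans P1.
rewrite -[f x]mul1r -(sum_alt_binom r0) mulr_suml /steklov_integrand -sumrB.
rewrite /binom_abs_sum mulr_suml.
apply: le_trans (ler_norm_sum _ _ _) _; apply: ler_sum_nat => m /andP[m1 mr].
rewrite -mulrBr !normrM normrX normrN1 expr1n mul1r ger0_norm ?ler0n //.
apply: ler_wpM2l; first exact: ler0n.
apply: fx; first by rewrite mulr_gt0 ?expR_gt0 ?powR_gt0.
have mr01 : 0 <= (m%:R / r%:R : R) <= 1.
  by rewrite divr_ge0 ?ler0n //= ler_pdivrMr ?ltr0n // mul1r ler_nat -ltnS.
have lnP : 0 <= ln P <= r%:R / w.
  by rewrite ln_ge0 //= -(expRK (r%:R / w)) ler_ln ?posrE ?expR_gt0.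
have shift : 0 <= m%:R / r%:R * ln P <= delta / 2.
  case/andP: mr01 => m0 m1'; case/andP: lnP => l0 l1.
  by rewrite mulr_ge0 //= (le_trans _ hr) // (le_trans _ l1) // ler_piMl.
rewrite lnM ?posrE ?expR_gt0 ?powR_gt0 // expRK ln_powR addrAC.
apply: le_trans (ler_normD _ _) _; case/andP: shift => s0 s1.
by rewrite (ger0_norm s0) [delta]splitr lerD.
Qed.

Lemma steklov_sample_bound f (w M : R) r k : 0 < w ->
  (forall y, 0 < y -> `|f y| <= M) -> `|steklov_sample f w r k| <= binom_abs_sum r * M.
Proof.
move=> w0 fM; rewrite ler_norml; apply: iter_int_bounds => // p /andP[p1 _].
by rewrite -ler_norml; apply: steklov_integrand_bound => //; exact: lt_le_trans p1.
Qed.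

Lemma steklov_sample_near f (x w eps delta : R) r k : (0 < r)%N -> 0 < w ->
  log_modulus_at f x delta eps -> r%:R / w <= delta / 2 ->
  `|k%:~R - ln (x `^ w)| <= w * delta / 2 ->
  `|steklov_sample f w r k - f x| <= binom_abs_sum r * eps.
Proof.
move=> r0 w0 fx hr hk; rewrite ler_distl; apply: iter_int_bounds => // p hp.
rewrite -ler_distl; apply: (steklov_integrand_near (delta := delta)) => //.
have -> : k%:~R / w - ln x = (k%:~R - ln (x `^ w)) / w.
  by rewrite ln_powR; field; rewrite gt_eqF.
by rewrite normrM normfV (gtr0_norm w0) ler_pdivrMr // mulrAC (mulrC delta).
Qed.

End steklov.

Section sampling_operator.
Variable R : realType.
Implicit Types (chi f : R -> R) (r : nat).

Lemma MS_op_dev_le chi f r (M M0 x w eps delta eta : R) :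
  (0 < r)%N -> (forall y, 0 < y -> `|f y| <= M) ->
  (forall N, zpartial (fun k => `|chi (expR (- k%:~R) * x `^ w)|) N <= M0) ->
  zpartial (fun k => chi (expR (- k%:~R) * x `^ w)) @ \oo --> (1 : R) ->
  0 < x -> 0 < w -> 0 <= eps -> log_modulus_at f x delta eps -> r%:R / w <= delta / 2 ->
  zsum (fun k => if w * delta / 2 < `|k%:~R - ln (x `^ w)|
                 then `|chi (expR (- k%:~R) * x `^ w)| else 0) <= eta ->
  `|MS_op chi w r f x - f x| <=
    binom_abs_sum R r * eps * M0 + (binom_abs_sum R r * M + M) * eta.
Proof.
move=> r0 fM chiM0 chi1 x0 w0 eps0 fx hr tail.
change (MS_op chi w r f x) with
  (zsum (fun k => chi (expR (- k%:~R) * x `^ w) * steklov_sample f w r k)).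
apply: (zsum_weighted_dev (far := fun k => w * delta / 2 < `|k%:~R - ln (x `^ w)|)) => //.
- exact: mulr_ge0 (binom_abs_sum_ge0 _ _) eps0.
- move=> k; apply: le_trans (ler_normB _ _) _.
  by apply: lerD; [exact: steklov_sample_bound | exact: fM].
- by move=> k; rewrite /= -leNgt; exact: steklov_sample_near.
Qed.

Lemma MS_op_dev_eventually chi f r (M : R) : (0 < r)%N -> is_kernel chi ->
  (forall y, 0 < y -> `|f y| <= M) ->
  forall e, 0 < e -> exists2 eps, 0 < eps & forall delta, 0 < delta ->
  \forall w \near +oo, forall x, 0 < x -> log_modulus_at f x delta eps ->
    `|MS_op chi w r f x - f x| <= e.
Proof.
move=> r0 [_ [_ [_ [chi1 [[M0 chiM0] chi_tail]]]]] fM e e0.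
have M0_ge0 : 0 <= M0.
  exact: le_trans (normr_ge0 _) (le_trans (ler_norm_zpartial _ 0) (chiM0 1 ltr01 0%N)).
have M_ge0 : 0 <= M := le_trans (normr_ge0 _) (fM 1 ltr01).
(* With A the coefficient of eps (resp. eta) in MS_op_dev_le, the choice
   e / (2 (A + 1)) makes each error term at most e / 2. *)
have share A : 0 <= A -> 0 < e / (2 * (A + 1)) /\ A * (e / (2 * (A + 1))) <= e / 2.
  move=> A0; have A1 : 0 < 2 * (A + 1) by rewrite mulr_gt0 // ltr_wpDl.
  split; first exact: divr_gt0.
  rewrite mulrA ler_pdivrMr // (_ : e / 2 * (2 * (A + 1)) = A * e + e); last by field.
  by rewrite mulrC lerDl ltW.
set S := binom_abs_sum R r; set C := S * M + M.
have S0 : 0 <= S := binom_abs_sum_ge0 _ _.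
have [eps0 eps_share] := share (S * M0) (mulr_ge0 S0 M0_ge0).
have [eta0 eta_share] := share C (addr_ge0 (mulr_ge0 S0 M_ge0) M_ge0).
exists (e / (2 * (S * M0 + 1))) => // delta delta0.
have [g0 tail_g0] := chi_tail _ eta0.
near=> w => x x0 fx.
have w0 : 0 < w by near: w; apply: nbhs_pinfty_gt; rewrite num_real.
have hr : r%:R / w <= delta / 2.
  have : 2 * r%:R / delta <= w by near: w; apply: nbhs_pinfty_ge; rewrite num_real.
  by rewrite !ler_pdivrMr //; lra.
have hg : g0 < w * delta / 2.
  have : 2 * g0 / delta < w by near: w; apply: nbhs_pinfty_gt; rewrite num_real.
  by rewrite ltr_pdivrMr //; lra.
have xw0 : 0 < x `^ w := powR_gt0 w x0.
apply: le_trans (MS_op_dev_le r0 fM (chiM0 _ xw0) (chi1 _ xw0) x0 w0 (ltW eps0) fx hr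
  (ltW (tail_g0 _ hg _ xw0))) _.
by rewrite (mulrAC S) [X in _ <= X](splitr e) lerD.
Unshelve. all: by end_near.
Qed.

Lemma continuous_log_modulus f (x eps : R) : 0 < x -> {for x, continuous f} ->
  0 < eps -> exists2 delta, 0 < delta & log_modulus_at f x delta eps.
Proof.
move=> x0 cf eps0.
have cf_exp : {for ln x, continuous (f \o expR)}.
  by apply: continuous_comp; [exact: continuous_expR | rewrite /= lnK ?posrE].
move/cvgrPdist_lt: cf_exp => /(_ eps eps0) /nbhs_ballP [d d0 hd].
exists (d / 2); first exact: divr_gt0.
move=> y y0 hy; have : ball (ln x) d (ln y).
  rewrite /ball /= distrC; apply: le_lt_trans hy _.
  by rewrite ltr_pdivrMr // ltr_pMr // ltr1n.
by move/hd; rewrite /= !lnK ?posrE // distrC => /ltW.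
Qed.

Lemma supnorm_Rp_bounds (g : R -> R) (e : R) : (forall x, 0 < x -> `|g x| <= e) ->
  (0 <= supnorm_Rp g <= e%:E)%E.
Proof.
move=> ge; apply/andP; split.
  apply: le_trans (ereal_sup_ubound _) => /=; last first.
    by exists 1; rewrite // /Rpos /= in_itv /= ltr01.
  by rewrite lee_fin normr_ge0.
apply: ge_ereal_sup => _ [x + <-]; rewrite /Rpos /= in_itv /= andbT => x0.
by rewrite lee_fin ge.
Qed.

Lemma supnorm_Rp_cvg0 T (F : set_system T) (g : T -> R -> R) : ProperFilter F ->
  (forall e, 0 < e -> \forall t \near F, forall x, 0 < x -> `|g t x| <= e) ->
  supnorm_Rp (g t) @[t --> F] --> 0%E.
Proof.
move=> PF ge.
have fin t e : (forall x, 0 < x -> `|g t x| <= e) -> supnorm_Rp (g t) \is a fin_num.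
  by move=> /supnorm_Rp_bounds /andP[s0 s1]; rewrite ge0_fin_numE // (le_lt_trans s1) ?ltry.
apply/fine_cvgP; split; first by apply: filterS (ge 1 ltr01) => t /fin.
apply/cvgrPdist_le => e e0; apply: filterS (ge e e0) => t gte.
have /andP[] := supnorm_Rp_bounds gte; rewrite -(fineK (fin _ _ gte)) !lee_fin => s0 s1.
by rewrite /= sub0r normrN ger0_norm.
Qed.

End sampling_operator.

Unset Implicit Arguments.

Theorem theorem1 (R : realType) (r : nat) (hr : (0 < r)%N) (chi : R -> R)
  (hchi : is_kernel chi) :
  (forall f : R -> R, bounded_Rp f -> loc_integrable_Rp f ->
     forall x, 0 < x -> {for x, continuous f} ->
       MS_op chi w r f x @[w --> +oo] --> f x) /\
  (forall f : R -> R, in_logC f ->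
     supnorm_Rp (fun x => MS_op chi w r f x - f x) @[w --> +oo] --> 0%E).
Proof.
split.
- move=> f [M fM] _ x x0 cf; apply/cvgrPdist_le => e e0.
  have [eps eps0 close] := MS_op_dev_eventually hr hchi fM e0.
  have [delta delta0 fx] := continuous_log_modulus x0 cf eps0.
  by apply: filterS (close _ delta0) => w /(_ x x0 fx); rewrite distrC.
- move=> f [[M fM] [_ f_unif]]; apply: supnorm_Rp_cvg0 => e e0.
  have [eps eps0 close] := MS_op_dev_eventually hr hchi fM e0.
  have [delta [delta0 fd]] := f_unif eps eps0.
  apply: filterS (close _ delta0) => w close_w x x0; apply: close_w => // y y0 hy.
  exact/ltW/fd.
Qed.
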